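(* Let $\Gamma_1$ and $\Gamma_2$ be signed graphs whose signed subdivision graphs $S(\Gamma_1)$ and $S(\Gamma_2)$ are noncospectral and equienergetic. Let $p$ be a positive integer and $k\in\{p,p-1\}$. Then (i) $S_p(\Gamma_1)$ and $S_p(\Gamma_2)$ are noncospectral and equienergetic; (ii) $S_p^k(\Gamma_1)$ and $S_p^k(\Gamma_2)$ are noncospectral and equienergetic.
   Context: A signed graph $\Gamma=(G,\sigma)$ is a simple graph $G$ with a sign function $\sigma:E(G)\to\{1,-1\}$; $A(\Gamma)$ has $(i,j)$ entry $\sigma(v_iv_j)$ if $v_iv_j\in E(G)$ and $0$ otherwise. The energy of a signed graph is the sum of the absolute values of its adjacency eigenvalues; two signed graphs are equienergetic if they have equal energy, and noncospectral if their adjacency spectra (with multiplicities) differ. Orientation: fix $\vartheta(v,e)\in\{1,-1\}$ for each vertex $v$ incident with edge $e$, such that for every edge $e=vw$, $\vartheta(v,e)\vartheta(w,e)=-\sigma(e)$. $S_p(\Gamma)$ ($p\ge1$): vertex set $V(G)\cup\{e_j^{(t)}:1\le j\le m,1\le t\le p\}$, edges exactly $v\,e_j^{(t)}$ for $v$ an end of $e_j$, with sign $\vartheta(v,e_j)$; $S(\Gamma)=S_1(\Gamma)$ is the signed subdivision graph. $S_p^k(\Gamma)$: vertex set $\{v_i^{(s)}:1\le i\le n,0\le s\le p\}\cup\{e_j^{(t)}:1\le j\le m,0\le t\le k\}$, edges exactly $v_i^{(s)}e_j^{(t)}$ for $v_i$ an end of $e_j$, with sign $\vartheta(v_i,e_j)$.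 *)

From mathcomp Require Import all_boot all_order all_algebra all_field.
Set Implicit Arguments. Unset Strict Implicit. Unset Printing Implicit Defensive.
Import Order.TTheory GRing.Theory Num.Theory.
Local Open Scope ring_scope.

(* Matrices are taken over algC (algebraically closed), so that the
   characteristic polynomial splits; the spectrum is the sequence of roots
   of the characteristic polynomial (eigenvalues with multiplicities). *)
Definition spectrum (N : nat) (A : 'M[algC]_N) : seq algC :=
  sval (closed_field_poly_normal (char_poly A)).

Definition energy (N : nat) (A : 'M[algC]_N) : algC :=
  \sum_(z <- spectrum A) `|z|.

(* Weighted (signed) adjacency on an arbitrary finite vertex type V:
   w x y is the signed adjacency entry (0 = no edge). The adjacency matrix
   is obtained by listing V via enum_val. *)
Definition adjmx (V : finType) (w : V -> V -> int) : 'M[algC]_#|V| :=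
  \matrix_(i, j) (w (enum_val i) (enum_val j))%:~R.

Definition cospectral (V W : finType) (w1 : V -> V -> int) (w2 : W -> W -> int) :=
  perm_eq (spectrum (adjmx w1)) (spectrum (adjmx w2)).

Definition equienergetic (V W : finType) (w1 : V -> V -> int) (w2 : W -> W -> int) :=
  energy (adjmx w1) = energy (adjmx w2).

Record signed_graph := SignedGraph {
  sg_n : nat;
  sg_m : nat;
  sg_end1 : 'I_sg_m -> 'I_sg_n;
  sg_end2 : 'I_sg_m -> 'I_sg_n;
  sg_sign : 'I_sg_m -> int
}.
Arguments sg_end1 : clear implicits.
Arguments sg_end2 : clear implicits.
Arguments sg_sign : clear implicits.

Definition wf_signed_graph (G : signed_graph) : Prop :=
  (forall e, sg_end1 G e != sg_end2 G e) /\
  (forall e f,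
      [set sg_end1 G e; sg_end2 G e] = [set sg_end1 G f; sg_end2 G f] -> e = f) /\
  (forall e, sg_sign G e = 1 \/ sg_sign G e = -1).

Definition incident (G : signed_graph) (v : 'I_(sg_n G)) (e : 'I_(sg_m G)) : bool :=
  (v == sg_end1 G e) || (v == sg_end2 G e).

(* An orientation: theta v e in {1,-1} for v incident with e, and
   theta(v,e) theta(w,e) = - sigma(e) for e = vw. Values at non-incident
   pairs are irrelevant. *)
Definition orientation (G : signed_graph)
    (theta : 'I_(sg_n G) -> 'I_(sg_m G) -> int) : Prop :=
  forall e,
    (theta (sg_end1 G e) e = 1 \/ theta (sg_end1 G e) e = -1) /\
    (theta (sg_end2 G e) e = 1 \/ theta (sg_end2 G e) e = -1) /\
    theta (sg_end1 G e) e * theta (sg_end2 G e) e = - sg_sign G e.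

(* S_p(Gamma): vertices V(G) + {e_j^(t) : j, t in 1..p} (t indexed by 'I_p). *)
Definition Sp_vertex (G : signed_graph) (p : nat) : finType :=
  ('I_(sg_n G) + ('I_(sg_m G) * 'I_p))%type.

Definition Sp_adj (G : signed_graph) (theta : 'I_(sg_n G) -> 'I_(sg_m G) -> int)
    (p : nat) (x y : Sp_vertex G p) : int :=
  match x, y with
  | inl v, inr (e, _) => if incident v e then theta v e else 0
  | inr (e, _), inl v => if incident v e then theta v e else 0
  | _, _ => 0
  end.

Arguments Sp_adj {G} theta p x y.

Definition S_adj (G : signed_graph) (theta : 'I_(sg_n G) -> 'I_(sg_m G) -> int) :=
  Sp_adj theta 1.

(* S_p^k(Gamma): vertices v_i^(s) (0 <= s <= p) and e_j^(t) (0 <= t <= k). *)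
Definition Spk_vertex (G : signed_graph) (p k : nat) : finType :=
  (('I_(sg_n G) * 'I_p.+1) + ('I_(sg_m G) * 'I_k.+1))%type.

Definition Spk_adj (G : signed_graph) (theta : 'I_(sg_n G) -> 'I_(sg_m G) -> int)
    (p k : nat) (x y : Spk_vertex G p k) : int :=
  match x, y with
  | inl (v, _), inr (e, _) => if incident v e then theta v e else 0
  | inr (e, _), inl (v, _) => if incident v e then theta v e else 0
  | _, _ => 0
  end.
Arguments Spk_adj {G} theta p k x y.

From mathcomp Require Import all_boot all_order all_algebra all_field ring zify.
Set Implicit Arguments. Unset Strict Implicit. Unset Printing Implicit Defensive.
Import Order.TTheory GRing.Theory Num.Theory.
Local Open Scope ring_scope.

(* S_p(G) and S_p^k(G) arise from the bipartite graph S(G) by replacing every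
   original vertex by dA copies and every edge vertex by dB copies, with
   (dA, dB) = (1, p), resp. (p + 1, k + 1).  The adjacency matrix of such a
   blow-up factors as X *m Y with Y *m X = sqrt(dA dB) A(S(G)), so Sylvester's
   identity 'X^n chi(XY) = 'X^N chi(YX) shows that its spectrum is
   sqrt(dA dB) spec S(G) padded with zeros.  Hence energies scale by
   sqrt(dA dB).  Cospectral blow-ups have the same order and the same sum of
   squared eigenvalues 4 dA dB m, hence the same n and m; stripping the zeros
   and the factor then makes S(G1) and S(G2) cospectral. *)

Lemma char_poly_mulmxC (R : comNzRingType) m n (X : 'M[R]_(m, n)) (Y : 'M[R]_(n, m)) :
  'X^n * char_poly (X *m Y) = 'X^m * char_poly (Y *m X).
Proof.
set XX := map_mx polyC X; set YY := map_mx polyC Y.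
(* Both sides are the determinant of [['X, X], [Y, 1]], up to a triangular factor. *)
pose B := block_mx ('X%:M : 'M_m) XX YY (1%:M : 'M_n).
have B_right : B *m block_mx 1%:M 0 (- YY) 1%:M =
               block_mx (char_poly_mx (X *m Y)) XX 0 1%:M.
  rewrite mulmx_block !mulmx1 !mulmx0 !mul1mx !add0r mulmxN addrN.
  by rewrite /char_poly_mx map_mxM.
have B_left : block_mx 1%:M 0 (- YY) ('X%:M) *m B =
              block_mx ('X%:M) XX 0 (char_poly_mx (Y *m X)).
  rewrite mulmx_block !mul1mx !mul0mx !addr0 mulNmx mulmx1.
  rewrite mul_mx_scalar mul_scalar_mx addNr.
  by rewrite /char_poly_mx map_mxM addrC mulNmx.
have := congr1 determinant B_right.
rewrite det_mulmx det_lblock det_ublock !det1 !mulr1 => detXY.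
have := congr1 determinant B_left.
rewrite det_mulmx det_lblock det_ublock det1 mul1r.
by rewrite /char_poly -detXY !det_scalar.
Qed.

Lemma polyXn_neq0 (R : nzRingType) n : ('X^n : {poly R}) != 0.
Proof. by rewrite monic_neq0 ?monicXn. Qed.

Lemma char_poly_conjmx (R : idomainType) n (A P : 'M[R]_n) : P \in unitmx ->
  char_poly (invmx P *m A *m P) = char_poly A.
Proof.
move=> P_unit; apply: (mulfI (polyXn_neq0 _ n)).
by rewrite char_poly_mulmxC mulmxA mulmxV // mul1mx.
Qed.

Lemma char_poly_diag_mx (R : comNzRingType) n (d : 'rV[R]_n) :
  char_poly (diag_mx d) = \prod_(z <- [seq d 0 i | i <- enum 'I_n]) ('X - z%:P).
Proof.
rewrite char_poly_trig ?diag_mx_is_trig // big_map big_enum /=.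
by apply: eq_bigr => i _; rewrite mxE eqxx mulr1n.
Qed.

Lemma char_poly_spectrum n (A : 'M[algC]_n) :
  char_poly A = \prod_(z <- spectrum A) ('X - z%:P).
Proof.
rewrite /spectrum; case: (closed_field_poly_normal (char_poly A)) => r /= ->.
by rewrite (monicP (char_poly_monic A)) scale1r.
Qed.

Lemma spectrum_perm n (A : 'M[algC]_n) s :
  char_poly A = \prod_(z <- s) ('X - z%:P) -> perm_eq (spectrum A) s.
Proof. by move=> charA; apply: prod_XsubC_eq; rewrite -char_poly_spectrum. Qed.

Lemma size_spectrum n (A : 'M[algC]_n) : size (spectrum A) = n.
Proof. by have := size_char_poly A; rewrite char_poly_spectrum size_prod_XsubC => -[]. Qed.

Lemma spectrum_pad n N (A : 'M[algC]_n) (B : 'M[algC]_N) : (n <= N)%N ->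
  'X^n * char_poly B = 'X^N * char_poly A ->
  perm_eq (spectrum B) (nseq (N - n) 0 ++ spectrum A).
Proof.
move=> le_nN charAB; apply: spectrum_perm; apply: (mulfI (polyXn_neq0 _ n)).
have prod_nseq0 k : \prod_(z <- nseq k (0 : algC)) ('X - z%:P) = 'X^k.
  by elim: k => [|k IHk]; rewrite ?big_nil // big_cons IHk subr0 exprS.
by rewrite charAB char_poly_spectrum big_cat prod_nseq0 mulrA -exprD subnKC.
Qed.

Section NormalMatrix.
Local Open Scope sesquilinear_scope.

Lemma adjmx_normalmx (V : finType) (w : V -> V -> int) :
  (forall x y, w x y = w y x) -> adjmx w \is normalmx.
Proof.
move=> w_sym; have adjmx_herm : (adjmx w) ^t* = adjmx w.
  by apply/matrixP => i j; rewrite !mxE rmorph_int w_sym.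
by apply/normalmxP; rewrite adjmx_herm.
Qed.

Variables (n : nat) (A : 'M[algC]_n).
Hypothesis A_normal : A \is normalmx.

Let P := spectralmx A.
Let d := spectral_diag A.
Let P_unit : P \in unitmx. Proof. exact: spectral_unit. Qed.
Let A_diag : A = invmx P *m diag_mx d *m P. Proof. exact/orthomx_spectralP. Qed.

Lemma spectrum_normalmx : perm_eq (spectrum A) [seq d 0 i | i <- enum 'I_n].
Proof. by apply: spectrum_perm; rewrite A_diag char_poly_conjmx // char_poly_diag_mx. Qed.

Lemma spectrum_scale_normalmx c :
  perm_eq (spectrum (c *: A)) [seq c * z | z <- spectrum A].
Proof.
rewrite perm_sym; apply: (perm_trans (perm_map _ spectrum_normalmx)).
rewrite perm_sym -map_comp; apply: spectrum_perm.
have -> : c *: A = invmx P *m diag_mx (c *: d) *m P.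
  rewrite {1}A_diag scalemxAl scalemxAr; congr (_ *m _ *m _).
  by apply/matrixP => i j; rewrite !mxE mulrnAr.
rewrite char_poly_conjmx // char_poly_diag_mx.
by congr (\prod_(z <- _) _); apply: eq_map => i /=; rewrite mxE.
Qed.

Lemma mxtrace_sqr_normalmx : \tr (A *m A) = \sum_(z <- spectrum A) z ^+ 2.
Proof.
rewrite (perm_big _ spectrum_normalmx) A_diag !mulmxA mulmxK // mxtrace_mulC.
rewrite !mulmxA mulmxV // mul1mx /mxtrace big_map big_enum /=.
by apply: eq_bigr => i _; rewrite mul_diag_mx !mxE eqxx mulr1n expr2.
Qed.

End NormalMatrix.

Section PaddedScaling.
Variables (R : idomainType) (c : R).

Lemma big_pad_scale (F : R -> R) z s : F 0 = 0 ->
  \sum_(x <- nseq z 0 ++ [seq c * y | y <- s]) F x = \sum_(y <- s) F (c * y).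
Proof.
move=> F0; rewrite big_cat big_map /= big1_seq ?add0r // => x /andP [_].
by move=> /nseqP [-> _].
Qed.

Lemma count_pad_scale (a : pred R) z s : ~~ a 0 ->
  count a (nseq z 0 ++ [seq c * y | y <- s]) = count (fun y => a (c * y)) s.
Proof. by move=> /negbTE a0; rewrite count_cat count_nseq a0 count_map. Qed.

Hypothesis c_neq0 : c != 0.

Lemma perm_eq_unpad_scale z1 z2 s1 s2 : size s1 = size s2 ->
  perm_eq (nseq z1 0 ++ [seq c * y | y <- s1]) (nseq z2 0 ++ [seq c * y | y <- s2]) ->
  perm_eq s1 s2.
Proof.
move=> eq_size /permP eq_counts.
have count_neq0 s : count (fun y => predC1 0 (c * y)) s = count (predC (pred1 0)) s.
  by apply: eq_count => y /=; rewrite mulf_eq0 negb_or c_neq0.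
apply/allP => x _; apply/eqP; have [->|x_neq0] := eqVneq x 0.
  have nz0 : ~~ @predC1 R 0 0 by rewrite /= eqxx.
  have := eq_counts (predC1 0); rewrite !(count_pad_scale _ _ nz0) !count_neq0.
  have := count_predC (pred1 0) s1; have := count_predC (pred1 0) s2.
  rewrite eq_size => size2 size1 eq_nz; apply/eqP.
  by rewrite -(eqn_add2r (count (predC (pred1 0)) s1)) size1 eq_nz size2.
have cx_neq0 : ~~ pred1 (c * x) 0 by rewrite /= eq_sym mulf_eq0 negb_or c_neq0.
have := eq_counts (pred1 (c * x)); rewrite !(count_pad_scale _ _ cx_neq0).
have count_scale s : count (fun y => c * y == c * x) s = count_mem x s.
  by apply: eq_count => y /=; rewrite (inj_eq (mulfI c_neq0)).
by rewrite !count_scale.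
Qed.

End PaddedScaling.

Definition blowup (V W : finType) (w : V -> V -> int) (w' : W -> W -> int) (pi : W -> V) :=
  forall x y, w' x y = w (pi x) (pi y).

Lemma sum_enum_val (V : finType) (F : V -> algC) :
  \sum_(i < #|V|) F (enum_val i) = \sum_(x : V) F x.
Proof. by rewrite (big_enum_val F). Qed.

Lemma char_poly_adjmx_blowup (V W : finType) (w : V -> V -> int) (w' : W -> W -> int)
    (pi : W -> V) (s : V -> algC) (c : algC) :
  blowup w w' pi -> (forall x, s x != 0) ->
  (forall x y, w x y != 0 -> #|[pred y' | pi y' == y]|%:R * s y / s x = c) ->
  'X^#|V| * char_poly (adjmx w') = 'X^#|W| * char_poly (c *: adjmx w).
Proof.
move=> w'E s_neq0 sE.
(* adjmx w' = X *m Y with X the s-weighted incidence of pi and Y the rows of adjmx w,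
   rescaled by s^-1 and repeated along the fibres of pi; then Y *m X = c *: adjmx w. *)
pose X : 'M[algC]_(#|W|, #|V|) :=
  \matrix_(i, j) ((pi (enum_val i) == enum_val j)%:R * s (enum_val j)).
pose Y : 'M[algC]_(#|V|, #|W|) :=
  \matrix_(i, j) ((s (enum_val i))^-1 * (w (enum_val i) (pi (enum_val j)))%:~R).
have -> : adjmx w' = X *m Y.
  apply/matrixP => i j; rewrite !mxE; under eq_bigr do rewrite !mxE.
  rewrite (sum_enum_val (fun x => (pi (enum_val i) == x)%:R * s x *
       ((s x)^-1 * (w x (pi (enum_val j)))%:~R))).
  rewrite (bigD1 (pi (enum_val i))) //= big1 ?addr0.
    by rewrite eqxx mul1r mulrA mulfV // mul1r w'E.
  by move=> x /negbTE; rewrite eq_sym => ->; rewrite !mul0r.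
have -> : c *: adjmx w = Y *m X.
  apply/matrixP => i j; rewrite !mxE; under eq_bigr do rewrite !mxE.
  rewrite (sum_enum_val (fun y' => (s (enum_val i))^-1 * (w (enum_val i) (pi y'))%:~R *
       ((pi y' == enum_val j)%:R * s (enum_val j)))).
  rewrite (bigID (fun y' => pi y' == enum_val j)) /= [X in _ + X]big1 ?addr0; last first.
    by move=> y' /negbTE ->; rewrite mul0r mulr0.
  rewrite (eq_bigr (fun _ => (s (enum_val i))^-1 * (w (enum_val i) (enum_val j))%:~R *
       s (enum_val j))); last by move=> y' /eqP ->; rewrite eqxx mul1r.
  rewrite sumr_const.
  have [->|w_neq0] := eqVneq (w (enum_val i) (enum_val j)) 0.
    by rewrite !mulr0 mul0r mul0rn.
  by rewrite -(sE _ _ w_neq0) -mulr_natl -mulr_natl; ring.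
exact: char_poly_mulmxC.
Qed.

Definition bipartite_adj (A B : finType) (w : A + B -> A + B -> int) :=
  (forall a a', w (inl a) (inl a') = 0) /\ (forall b b', w (inr b) (inr b') = 0).

Definition uniform_blowup (A B W : finType) (w : A + B -> A + B -> int)
    (w' : W -> W -> int) (pi : W -> A + B) (dA dB : nat) :=
  [/\ blowup w w' pi, forall a, #|[pred y | pi y == inl a]| = dA
    & forall b, #|[pred y | pi y == inr b]| = dB].

Section UniformBlowup.
Variables (A B W : finType) (w : A + B -> A + B -> int) (w' : W -> W -> int).
Variables (pi : W -> A + B) (dA dB : nat).
Hypothesis w'_blowup : uniform_blowup w w' pi dA dB.

Lemma card_uniform_blowup : #|W| = (dA * #|A| + dB * #|B|)%N.
Proof.
case: w'_blowup => _ cardA cardB.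
rewrite -sum1_card (partition_big pi predT) //= big_sumType /=.
rewrite (eq_bigr (fun=> dA)) => [|a _]; last by rewrite sum1_card -(cardA a).
rewrite [X in (_ + X)%N](eq_bigr (fun=> dB)) => [|b _]; last by rewrite sum1_card -(cardB b).
by rewrite !sum_nat_const !cardT mulnC [(_ * dB)%N]mulnC.
Qed.

Hypotheses (dA_gt0 : (0 < dA)%N) (dB_gt0 : (0 < dB)%N) (w_bip : bipartite_adj w).

Lemma char_poly_uniform_blowup :
  'X^#|{: A + B}| * char_poly (adjmx w') =
  'X^#|W| * char_poly (sqrtC (dA * dB)%:R *: adjmx w).
Proof.
case: w'_blowup w_bip => w'E cardA cardB [wAA wBB].
set c := sqrtC _.
have dA_neq0 : (dA%:R : algC) != 0 by rewrite pnatr_eq0 -lt0n.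
have dB_neq0 : (dB%:R : algC) != 0 by rewrite pnatr_eq0 -lt0n.
have c_neq0 : c != 0 by rewrite sqrtC_eq0 pnatr_eq0 -lt0n muln_gt0 dA_gt0.
have c2 : c * c = dA%:R * dB%:R by rewrite -expr2 sqrtCK natrM.
(* Weights 1 on A and c / dB on B balance the two fibre sizes. *)
apply: (char_poly_adjmx_blowup (s := fun x => if x is inl _ then 1 else c / dB%:R)) => //.
  by case=> [a|b] /=; rewrite ?oner_eq0 ?mulf_neq0 // invr_eq0.
case=> [a|b] [a'|b'].
- by rewrite wAA eqxx.
- by move=> _; rewrite cardB; field.
- move=> _; rewrite cardA; apply: (mulfI c_neq0); rewrite c2; field.
  by rewrite c_neq0 dB_neq0.
- by rewrite wBB eqxx.
Qed.

Hypothesis w_sym : forall x y, w x y = w y x.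

Local Notation c := (sqrtC (dA * dB)%:R : algC).

Lemma spectrum_uniform_blowup :
  perm_eq (spectrum (adjmx w'))
          (nseq (#|W| - #|{: A + B}|) 0 ++ [seq c * z | z <- spectrum (adjmx w)]).
Proof.
have le_card : (#|{: A + B}| <= #|W|)%N.
  by rewrite card_sum card_uniform_blowup leq_add // leq_pmull.
apply: (perm_trans (spectrum_pad le_card char_poly_uniform_blowup)).
by rewrite perm_cat2l; apply: spectrum_scale_normalmx; apply: adjmx_normalmx.
Qed.

Lemma energy_uniform_blowup : energy (adjmx w') = c * energy (adjmx w).
Proof.
rewrite /energy (perm_big _ spectrum_uniform_blowup) big_pad_scale ?normr0 //.
rewrite mulr_sumr; apply: eq_bigr => z _.
by rewrite normrM ger0_norm // sqrtC_ge0 ler0n.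
Qed.

Lemma sum_sqr_spectrum_uniform_blowup :
  \sum_(z <- spectrum (adjmx w')) z ^+ 2 = (dA * dB)%:R * \tr (adjmx w *m adjmx w).
Proof.
rewrite (perm_big _ spectrum_uniform_blowup) big_pad_scale ?expr0n //.
rewrite mxtrace_sqr_normalmx ?adjmx_normalmx // mulr_sumr; apply: eq_bigr => z _.
by rewrite exprMn sqrtCK.
Qed.

End UniformBlowup.

Lemma mxtrace_adjmx_sqr (V : finType) (w : V -> V -> int) :
  \tr (adjmx w *m adjmx w) = (\sum_x \sum_y w x y * w y x)%:~R.
Proof.
rewrite /mxtrace rmorph_sum.
rewrite -(sum_enum_val (fun x => (\sum_y w x y * w y x)%:~R)); apply: eq_bigr => i _.
rewrite !mxE rmorph_sum.
rewrite -(sum_enum_val (fun y => (w (enum_val i) y * w y (enum_val i))%:~R)).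
apply: eq_bigr => j _.
by rewrite !mxE intrM.
Qed.

Lemma sum_adj_sqr_bipartite (A B : finType) (w : A + B -> A + B -> int) :
  bipartite_adj w -> (forall x y, w x y = w y x) ->
  \sum_x \sum_y w x y * w y x = (\sum_a \sum_b w (inl a) (inr b) ^+ 2) *+ 2.
Proof.
move=> [wAA wBB] w_sym; rewrite big_sumType /= mulr2n; congr (_ + _).
  apply: eq_bigr => a _; rewrite big_sumType /= big1 ?add0r => [|a' _].
    by apply: eq_bigr => b _; rewrite expr2 [w (inr b) _]w_sym.
  by rewrite wAA mul0r.
rewrite [RHS]exchange_big; apply: eq_bigr => b _.
rewrite big_sumType /= [X in _ + X]big1 ?addr0 => [|b' _].
  by apply: eq_bigr => a _; rewrite expr2 [w (inr b) _]w_sym.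
by rewrite wBB mul0r.
Qed.

Lemma Sp_adj_sym G theta p x y : @Sp_adj G theta p x y = Sp_adj theta p y x.
Proof. by case: x => [v|[e t]]; case: y => [v'|[e' t']]. Qed.

Lemma sum_incident_sqr G (theta : 'I_(sg_n G) -> 'I_(sg_m G) -> int) e :
  wf_signed_graph G -> orientation theta ->
  \sum_(v : 'I_(sg_n G)) (if incident v e then theta v e else 0) ^+ 2 = 2.
Proof.
move=> [no_loop _] theta_or; have [[th1|th1] [[th2|th2] _]] := theta_or e;
rewrite (bigD1 (sg_end1 G e)) //= (bigD1 (sg_end2 G e)) /=; try by rewrite eq_sym no_loop.
all: rewrite big1 ?addr0 /incident ?eqxx ?orbT ?th1 ?th2 //.
all: by move=> v /andP [/negbTE -> /negbTE ->].
Qed.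

Lemma S_adj_bipartite G (theta : 'I_(sg_n G) -> 'I_(sg_m G) -> int) :
  bipartite_adj (S_adj theta).
Proof. by split=> [//|[? ?] [? ?]]. Qed.

Lemma mxtrace_S_adj_sqr G (theta : 'I_(sg_n G) -> 'I_(sg_m G) -> int) :
  wf_signed_graph G -> orientation theta ->
  \tr (adjmx (S_adj theta) *m adjmx (S_adj theta)) = (4 * sg_m G)%:R.
Proof.
move=> G_wf theta_or; rewrite mxtrace_adjmx_sqr sum_adj_sqr_bipartite.
- rewrite exchange_big (eq_bigr (fun=> 2)) => [|[e t] _]; last exact: sum_incident_sqr.
  rewrite sumr_const card_prod !card_ord muln1 -!mulrnA mulrz_nat.
  by congr (_ *+ _); lia.
- exact: S_adj_bipartite.
- exact: Sp_adj_sym.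
Qed.

Definition copy_proj (A A' M P : finType) (f : A' -> A) (y : A' + M * P) : A + M * 'I_1 :=
  match y with inl a => inl (f a) | inr q => inr (q.1, ord0) end.

Lemma card_fst_eq (M P : finType) (m : M) : #|[pred q : M * P | q.1 == m]| = #|P|.
Proof.
have -> : #|[pred q : M * P | q.1 == m]| = #|setX [set m] [set: P]|.
  by apply: eq_card => q; rewrite !inE andbT.
by rewrite cardsX cards1 cardsT mul1n.
Qed.

Lemma card_copy_proj_inl (A A' M P : finType) (f : A' -> A) (v : A) :
  #|[pred y | @copy_proj A A' M P f y == inl v]| = #|[pred a | f a == v]|.
Proof. by rewrite -!sum1_card big_sumType /= [X in (_ + X)%N]big_pred0 ?addn0. Qed.

Lemma card_copy_proj_inr (A A' M P : finType) (f : A' -> A) (b : M * 'I_1) :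
  #|[pred y | @copy_proj A A' M P f y == inr b]| = #|P|.
Proof.
rewrite -(card_fst_eq P b.1) -!sum1_card big_sumType /= big_pred0 ?add0n //.
apply: eq_bigl => q; case: b => e t; rewrite (ord1 t) /=.
by rewrite !inE /= (inj_eq (@inr_inj _ _)) xpair_eqE andbT.
Qed.

Lemma Sp_uniform_blowup G (theta : 'I_(sg_n G) -> 'I_(sg_m G) -> int) p :
  uniform_blowup (S_adj theta) (Sp_adj theta p) (copy_proj id) 1 p.
Proof.
split=> [[v|[e t]] [v'|[e' t']] //|v|e]; last by rewrite card_copy_proj_inr card_ord.
by rewrite card_copy_proj_inl -(card1 v); apply: eq_card => a; rewrite !inE.
Qed.

Lemma Spk_uniform_blowup G (theta : 'I_(sg_n G) -> 'I_(sg_m G) -> int) p k :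
  uniform_blowup (S_adj theta) (Spk_adj theta p k) (copy_proj fst) p.+1 k.+1.
Proof.
split=> [[[v s]|[e t]] [[v' s']|[e' t']] //|v|e].
  by rewrite card_copy_proj_inl (card_fst_eq _ v) card_ord.
by rewrite card_copy_proj_inr card_ord.
Qed.

Lemma S_blowup_noncospectral_equienergetic (G1 G2 : signed_graph)
    (theta1 : 'I_(sg_n G1) -> 'I_(sg_m G1) -> int)
    (theta2 : 'I_(sg_n G2) -> 'I_(sg_m G2) -> int)
    (W1 W2 : finType) (w1 : W1 -> W1 -> int) (w2 : W2 -> W2 -> int)
    (pi1 : W1 -> Sp_vertex G1 1) (pi2 : W2 -> Sp_vertex G2 1) (dA dB : nat) :
  wf_signed_graph G1 -> wf_signed_graph G2 ->
  orientation theta1 -> orientation theta2 -> (0 < dA)%N -> (0 < dB)%N ->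
  uniform_blowup (S_adj theta1) w1 pi1 dA dB ->
  uniform_blowup (S_adj theta2) w2 pi2 dA dB ->
  ~ cospectral (S_adj theta1) (S_adj theta2) ->
  equienergetic (S_adj theta1) (S_adj theta2) ->
  ~ cospectral w1 w2 /\ equienergetic w1 w2.
Proof.
move=> wf1 wf2 or1 or2 dA_gt0 dB_gt0 blow1 blow2 ncospS eqeS.
have [bip1 bip2] := (S_adj_bipartite theta1, S_adj_bipartite theta2).
have [sym1 sym2] := (@Sp_adj_sym G1 theta1 1, @Sp_adj_sym G2 theta2 1).
split; last first.
  rewrite /equienergetic (energy_uniform_blowup blow1) // (energy_uniform_blowup blow2) //.
  by rewrite eqeS.
move=> cosp; apply: ncospS.
have dAdB_neq0 : (dA * dB)%:R != 0 :> algC by rewrite pnatr_eq0 -lt0n muln_gt0 dA_gt0.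
have eq_card : #|W1| = #|W2|.
  by rewrite -(size_spectrum (adjmx w1)) -(size_spectrum (adjmx w2)) (perm_size cosp).
have eq_m : sg_m G1 = sg_m G2.
  have : \sum_(z <- spectrum (adjmx w1)) z ^+ 2 = \sum_(z <- spectrum (adjmx w2)) z ^+ 2.
    exact: perm_big.
  rewrite (sum_sqr_spectrum_uniform_blowup blow1) // (sum_sqr_spectrum_uniform_blowup blow2) //.
  rewrite !mxtrace_S_adj_sqr // => /(mulfI dAdB_neq0) /eqP.
  by rewrite eqr_nat eqn_pmul2l // => /eqP.
have eq_n : sg_n G1 = sg_n G2.
  move: eq_card; rewrite (card_uniform_blowup blow1) (card_uniform_blowup blow2).
  by rewrite !card_prod !card_ord eq_m => /eqP; rewrite eqn_add2r eqn_pmul2l // => /eqP.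
have c_neq0 : sqrtC (dA * dB)%:R != 0 :> algC by rewrite sqrtC_eq0.
have spec1 := spectrum_uniform_blowup blow1 dA_gt0 dB_gt0 bip1 sym1.
have spec2 := spectrum_uniform_blowup blow2 dA_gt0 dB_gt0 bip2 sym2.
rewrite perm_sym in spec1.
apply: (perm_eq_unpad_scale c_neq0 _ (perm_trans spec1 (perm_trans cosp spec2))).
by rewrite !size_spectrum !card_sum !card_prod !card_ord eq_n eq_m.
Qed.

Theorem corollary4p11 (G1 G2 : signed_graph)
  (theta1 : 'I_(sg_n G1) -> 'I_(sg_m G1) -> int)
  (theta2 : 'I_(sg_n G2) -> 'I_(sg_m G2) -> int) :
  wf_signed_graph G1 -> wf_signed_graph G2 ->
  orientation theta1 -> orientation theta2 ->
  ~ cospectral (S_adj theta1) (S_adj theta2) ->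
  equienergetic (S_adj theta1) (S_adj theta2) ->
  forall p k : nat, (0 < p)%N -> (k = p \/ k = p.-1) ->
  (~ cospectral (Sp_adj theta1 p) (Sp_adj theta2 p) /\
   equienergetic (Sp_adj theta1 p) (Sp_adj theta2 p)) /\
  (~ cospectral (Spk_adj theta1 p k) (Spk_adj theta2 p k) /\
   equienergetic (Spk_adj theta1 p k) (Spk_adj theta2 p k)).
Proof.
move=> wf1 wf2 or1 or2 ncospS eqeS p k p_gt0 _.
split.
  by apply: (S_blowup_noncospectral_equienergetic wf1 wf2 or1 or2 _ _
    (Sp_uniform_blowup theta1 p) (Sp_uniform_blowup theta2 p)).
by apply: (S_blowup_noncospectral_equienergetic wf1 wf2 or1 or2 _ _
  (Spk_uniform_blowup theta1 p k) (Spk_uniform_blowup theta2 p k)).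
Qed.
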